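(* In the setting below, suppose $p\geq5$. Then for all distinct $i,j,k\in\mathbb Z/N\mathbb Z$ we have $P^+_{ij}\cap P^+_{jk}\subset P^+_{ik}$.
   Context: Setting: $p,q$ distinct primes, $N=p+q$; $M=(m_{ik})_{i,k\in\mathbb Z/N\mathbb Z}$ has entries in $\mathbb Z/pq\mathbb Z$ and $(e^{2\pi i\,m_{ik}/pq})$ is a complex Hadamard matrix (unimodular entries, orthogonal rows). $L_i(k)=m_{ik}$, $L_{ij}=L_j-L_i$. For $d\mid pq$, $d(\mathbb Z/pq\mathbb Z)$ is the subgroup of multiples of $d$. For distinct $i,j$ there is a partition $\mathbb Z/N\mathbb Z=P_{ij}\sqcup Q_{ij}\sqcup R_{ij}$ and $r\in\mathbb Z/pq\mathbb Z$ with: $\#R_{ij}=2$ and $L_{ij}\equiv r$ on $R_{ij}$; $\#P_{ij}=p-1$ and $L_{ij}(P_{ij})=(r+q(\mathbb Z/pq\mathbb Z))\setminus\{r\}$; $\#Q_{ij}=q-1$ and $L_{ij}(Q_{ij})=(r+p(\mathbb Z/pq\mathbb Z))\setminus\{r\}$. This partition is unique ($R_{ij}$ is the pair of indices where $L_{ij}$ takes its unique repeated value). Put $P^+_{ij}=P_{ij}\cup R_{ij}$, $Q^+_{ij}=Q_{ij}\cup R_{ij}$. *)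

From HB Require Import structures.
From mathcomp Require Import all_boot all_order all_algebra all_field.
Set Implicit Arguments. Unset Strict Implicit. Unset Printing Implicit Defensive.
Import Order.TTheory GRing.Theory Num.Theory.
Local Open Scope ring_scope.

(* e^{2 pi i / n} in algC: n.-root (-1) is e^{i pi / n} (minimal argument). *)
Definition omega (n : nat) : algC := (n.-root (-1)) ^+ 2.

Definition cexp (n : nat) (m : 'Z_n) : algC := omega n ^+ (val m).

(* (e^{2 pi i m_ik / n})_{ik} is a complex Hadamard matrix:
   unimodular entries (automatic) and pairwise orthogonal rows. *)
Definition hadamard_phase (N n : nat) (M : 'M['Z_n]_N) : Prop :=
  forall i j : 'I_N, i != j ->
    \sum_(k < N) cexp (M i k) * (cexp (M j k))^* = 0.

Definition Lij (N n : nat) (M : 'M['Z_n]_N) (i j : 'I_N) (k : 'I_N) : 'Z_n :=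
  M j k - M i k.

Definition multiples (n d : nat) : {set 'Z_n} := [set (d%:R * y) | y : 'Z_n].

Definition repeated (N n : nat) (M : 'M['Z_n]_N) (i j : 'I_N) (r : 'Z_n) : bool :=
  (1 < #|[set k : 'I_N | Lij M i j k == r]|)%N.

(* P^+_{ij} = P_{ij} \cup R_{ij} = { k | L_{ij}(k) \in r + q(Z/pqZ) },
   r the (unique) repeated value of L_{ij}. *)
Definition Pplus (N n q : nat) (M : 'M['Z_n]_N) (i j : 'I_N) : {set 'I_N} :=
  [set k : 'I_N | [exists r : 'Z_n,
      repeated M i j r && (Lij M i j k - r \in multiples n q)]].

(* Orthogonality of rows i and j says that the p + q roots of unity w ^ L_ij(k),
   w = e^(2 pi i / pq), sum to zero.  Applying the Galois automorphisms
   w |-> w ^ m, m prime to pq, and summing over m turns this into a vanishing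
   sum of Ramanujan sums, whose evaluation gives for every residue x the count
   identity  pq C(x) + p + q = q A(x) + p B(x),  where C, A, B count the k with
   L_ij(k) = x modulo pq, q and p.  Read modulo p it gives A = 1 mod p, and as
   A sums to p + q over the residues mod q, A is 1 except at one residue;
   symmetrically for B.  So the values of L_ij are the cosets r + qZ and
   r + pZ, r being the repeated value, and P^+_ij is the set where
   L_ij = r_ij mod q.  Since L_ik = L_ij + L_jk, if r_ik were not r_ij + r_jk
   mod q, every k in P^+_ij would have two of its three values determined,
   leaving at most 4 such k; but P^+_ij has p + 1 >= 6 elements. *)

From HB Require Import structures.
From mathcomp Require Import all_boot all_order all_algebra all_field zify.
Import Order.TTheory GRing.Theory Num.Theory.
Set Implicit Arguments. Unset Strict Implicit. Unset Printing Implicit Defensive.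

Definition count_mod (I : finType) (a : I -> nat) d x : nat :=
  \sum_(k : I) (a k == x %[mod d]).

Lemma eqn_modMl_coprime d k m n : coprime k d ->
  (k * m == k * n %[mod d]) = (m == n %[mod d]).
Proof.
move=> co_kd; wlog le_nm : m n / n <= m.
  move=> sym; case: (leqP n m) => [|/ltnW] /sym // symE.
  by rewrite eq_sym symE eq_sym.
by rewrite !eqn_mod_dvd ?leq_mul2l ?le_nm ?orbT // -mulnBr Gauss_dvdr // coprime_sym.
Qed.

Lemma sum_spike_mod1 d s (F : 'I_s -> nat) : 1 < d ->
  (forall x, F x = 1 %[mod d]) -> \sum_x F x = d + s ->
  exists x0, forall x, F x = d * (x == x0) + 1.
Proof.
move=> d_gt1 F1 sumF; have FE x : F x = F x %/ d * d + 1.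
  by rewrite {1}(divn_eq (F x) d) F1 modn_small.
have /eqP/sum_nat_eq1[x0 [_ Fx0 Fx]] : \sum_x F x %/ d = 1.
  apply/eqP; rewrite -(eqn_pmul2r (ltnW d_gt1)) mul1n -(eqn_add2r s) -sumF.
  by rewrite big_distrl -[s in _ + s]card_ord -sum1_card -big_split; apply/eqP/eq_bigr.
exists x0 => x; rewrite FE mulnC; case: eqP => [->|/eqP ne]; first by rewrite Fx0.
by rewrite Fx.
Qed.

Lemma count_mod_modn (I : finType) (a : I -> nat) d x :
  count_mod a d (x %% d) = count_mod a d x.
Proof. by apply: eq_bigr => k _; rewrite modn_mod. Qed.

Lemma sum_count_mod (I : finType) (a : I -> nat) d : 0 < d ->
  \sum_(x < d) count_mod a d x = #|I|.
Proof.
move=> d_gt0; rewrite exchange_big -sum1_card; apply: eq_bigr => k _.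
rewrite (bigD1 (Ordinal (ltn_pmod (a k) d_gt0))) //= modn_mod eqxx big1 // => x.
by rewrite -val_eqE /= [x %% d]modn_small // eq_sym => /negPf->.
Qed.

Definition count_identity (I : finType) (a : I -> nat) p q := forall x,
  p * q * count_mod a (p * q) x + #|I| = q * count_mod a q x + p * count_mod a p x.

Lemma count_identityC (I : finType) (a : I -> nat) p q :
  count_identity a p q -> count_identity a q p.
Proof. by move=> a_id x; rewrite [q * p]mulnC a_id addnC. Qed.

Lemma count_mod_congr1 (I : finType) (a : I -> nat) p q :
  coprime q p -> #|I| = p + q -> count_identity a p q ->
  forall x, count_mod a q x = 1 %[mod p].
Proof.
move=> co_qp card_I a_id x.
apply/eqP; rewrite -(eqn_modMl_coprime _ _ co_qp) muln1.
have : p * (q * count_mod a (p * q) x + 1) + q = p * count_mod a p x + q * count_mod a q x.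
  by have := a_id x; rewrite card_I; lia.
by rewrite ![p * _]mulnC => /(congr1 (modn^~ p)); rewrite /= !modnMDl => ->.
Qed.

Section CountStructure.
Variables (I : finType) (p q : nat) (a : I -> nat).
Hypotheses (p_pr : prime p) (q_pr : prime q) (p_neq_q : p != q).
Hypothesis card_I : #|I| = p + q.
Hypothesis a_id : count_identity a p q.

Lemma count_mod_structure :
  exists r, forall x, count_mod a (p * q) x = (x == r %[mod q]) + (x == r %[mod p]).
Proof.
have co_pq : coprime p q by rewrite prime_coprime // dvdn_prime2.
have co_qp : coprime q p by rewrite coprime_sym.
have [x0 Ax] : exists x0 : 'I_q, forall x : 'I_q, count_mod a q x = p * (x == x0) + 1.
  apply: sum_spike_mod1; first exact: prime_gt1.
    exact: count_mod_congr1 co_qp card_I a_id.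
  by rewrite sum_count_mod ?prime_gt0 // card_I.
have [y0 By] : exists y0 : 'I_p, forall y : 'I_p, count_mod a p y = q * (y == y0) + 1.
  apply: sum_spike_mod1; first exact: prime_gt1.
    by apply: count_mod_congr1 co_pq _ (count_identityC a_id); rewrite card_I addnC.
  by rewrite sum_count_mod ?prime_gt0 // card_I addnC.
set r := chinese p q y0 x0.
have Ar x : count_mod a q x = p * (x == r %[mod q]) + 1.
  rewrite -count_mod_modn (Ax (Ordinal (ltn_pmod x (prime_gt0 q_pr)))) -val_eqE /=.
  by rewrite chinese_modr // (modn_small (ltn_ord x0)).
have Br x : count_mod a p x = q * (x == r %[mod p]) + 1.
  rewrite -count_mod_modn (By (Ordinal (ltn_pmod x (prime_gt0 p_pr)))) -val_eqE /=.
  by rewrite chinese_modl // (modn_small (ltn_ord y0)).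
have pq_gt0 : 0 < p * q by rewrite muln_gt0 !prime_gt0.
exists r => x; apply/eqP; rewrite -(eqn_pmul2l pq_gt0).
rewrite -(eqn_add2r #|I|) a_id Ar Br card_I.
by rewrite !mulnDr !muln1 !mulnA [q * p]mulnC addnACA [q + p]addnC.
Qed.
End CountStructure.

Local Open Scope ring_scope.

Lemma omega_expr_order n : (0 < n)%N -> omega n ^+ n = 1.
Proof. by move=> n_gt0; rewrite -exprM mulnC exprM rootCK // sqrrN expr1n. Qed.

Section ComplexExponential.
Variable n : nat.
Hypothesis n_gt1 : (1 < n)%N.

Lemma cexpD (x y : 'Z_n) : cexp (x + y) = cexp x * cexp y.
Proof.
rewrite /cexp; have -> : val (x + y) = ((val x + val y) %% n)%N.
  by rewrite -val_Zp_nat // natrD !natr_Zp.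
by rewrite expr_mod ?exprD // omega_expr_order // ltnW.
Qed.

Lemma cexpN (x : 'Z_n) : cexp (- x) = (cexp x)^-1.
Proof. by apply/esym/mulr1_eq; rewrite -cexpD subrr. Qed.

Lemma conjC_cexp (x : 'Z_n) : (cexp x)^* = cexp (- x).
Proof.
have norm1 : `|cexp x| = 1.
  apply/eqP; rewrite -(@pexpr_eq1 _ _ n) ?normr_ge0 ?(ltnW n_gt1) //.
  by rewrite -normrX -exprM mulnC exprM omega_expr_order ?expr1n ?normr1 // ltnW.
by rewrite cexpN invC_norm norm1 expr1n invr1 mul1r.
Qed.

End ComplexExponential.

Lemma sum_omega_Lij_eq0 N n (M : 'M['Z_n]_N) i j : (1 < n)%N ->
  hadamard_phase M -> i != j -> \sum_k omega n ^+ val (Lij M i j k) = 0.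
Proof.
move=> n_gt1 hM ij; rewrite -[RHS](hM j i) 1?eq_sym //; apply: eq_bigr => k _.
by rewrite conjC_cexp // -cexpD.
Qed.

Lemma sum_expr_unity (z : algC) k : z ^+ k = 1 ->
  \sum_(m < k) z ^+ m = if z == 1 then k%:R else 0.
Proof.
move=> zk; have [->|z_neq1] := eqVneq z 1.
  by rewrite (eq_bigr (fun _ => 1)) ?sumr_const ?card_ord // => m _; rewrite expr1n.
apply/eqP; move: (subrX1 z k); rewrite zk subrr => /esym/eqP.
by rewrite mulf_eq0 subr_eq0 (negPf z_neq1).
Qed.

Lemma sum_prim_root_exprM (z : algC) d y : d.-primitive_root z ->
  \sum_(m < d) z ^+ (m * y) = (d %| y)%:R * d%:R.
Proof.
move=> zd; rewrite (eq_bigr (fun m : 'I_d => (z ^+ y) ^+ m)); last first.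
  by move=> m _; rewrite -exprM mulnC.
rewrite sum_expr_unity; last by rewrite -exprM mulnC exprM (prim_expr_order zd) expr1n.
by rewrite -(prim_order_dvd zd); case: (d %| y)%N; rewrite ?mul1r ?mul0r.
Qed.

Lemma big_ord_dvdn (R : nmodType) a b (F : nat -> R) : (0 < a)%N ->
  \sum_(m < a * b | (a %| m)%N) F m = \sum_(j < b) F (a * j)%N.
Proof.
move=> a_gt0; elim: b => [|b IHb]; first by rewrite muln0 !big_ord0.
rewrite big_ord_recr /= -IHb -!(big_mkord (fun m => (a %| m)%N)) mulnS addnC.
rewrite (big_cat_nat _ (leq_addr a (a * b))) //=; congr (_ + _).
rewrite big_ltn_cond; last by rewrite -[X in (X < _)%N]addn0 ltn_add2l.
rewrite dvdn_mulr // big_nat_cond big1 => [|m]; first by rewrite addr0.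
rewrite andbC => /andP[/dvdnP[k ->]]; rewrite mulnC -mulSnr !ltn_pmul2r //.
by case/andP=> lt_bk; rewrite ltnS leqNgt lt_bk.
Qed.

Lemma sum_prim_root_dvdn (z : algC) n d k y : n = (d * k)%N -> (0 < d)%N ->
  n.-primitive_root z -> \sum_(m < n | (d %| m)%N) z ^+ (m * y) = (k %| y)%:R * k%:R.
Proof.
move=> -> d_gt0 z_prim; have zd_prim : k.-primitive_root (z ^+ d).
  by have := exp_prim_root z_prim d; rewrite gcdnMr mulKn.
rewrite (@big_ord_dvdn _ d k (fun m => z ^+ (m * y)%N)) // -(sum_prim_root_exprM y zd_prim).
by apply: eq_bigr => j _; rewrite -exprM mulnA.
Qed.

Definition ramanujan_sum (z : algC) d y := \sum_(m < d | coprime m d) z ^+ (m * y).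

Section VanishingSum.
Variables (I : finType) (z : algC) (d : nat) (a : I -> nat).
Hypotheses (z_prim : d.-primitive_root z) (a_vanish : \sum_k z ^+ a k = 0).

Lemma vanishing_sum_Galois m : coprime m d -> \sum_k z ^+ (m * a k) = 0.
Proof.
move=> co_md; have [u uE] := Qn_aut_exists co_md.
transitivity (u (\sum_k z ^+ a k)); last by rewrite a_vanish rmorph0.
rewrite rmorph_sum; apply: eq_bigr => k _.
rewrite uE; first by rewrite -exprM mulnC.
by rewrite -exprM mulnC exprM (prim_expr_order z_prim) expr1n.
Qed.

Lemma vanishing_sum_ramanujan : \sum_k ramanujan_sum z d (a k) = 0.
Proof. by rewrite exchange_big big1 // => m; apply: vanishing_sum_Galois. Qed.

End VanishingSum.

Lemma vanishing_sum_shift (I : finType) (z : algC) (a : I -> nat) b :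
  \sum_k z ^+ a k = 0 -> \sum_k z ^+ (a k + b) = 0.
Proof.
move=> a_vanish; rewrite (eq_bigr (fun k => z ^+ a k * z ^+ b)) => [|k _].
  by rewrite -mulr_suml a_vanish mul0r.
by rewrite exprD.
Qed.

Lemma ramanujan_sum_prime (z : algC) d y : prime d -> d.-primitive_root z ->
  ramanujan_sum z d y + 1 = (d %| y)%:R * d%:R.
Proof.
move=> d_pr z_prim; rewrite -(sum_prim_root_exprM y z_prim).
rewrite [RHS](bigD1 (Ordinal (prime_gt0 d_pr))) //= mul0n expr0 addrC.
congr (_ + _); apply: eq_bigl => m; rewrite coprime_sym prime_coprime //.
by case: m => [[|m] lt_md]; rewrite -val_eqE /= ?dvdn0 // gtnNdvd.
Qed.

Lemma ramanujan_sum_pq (z : algC) p q y : prime p -> prime q -> p != q ->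
  (p * q).-primitive_root z ->
  ramanujan_sum z (p * q) y + (q %| y)%:R * q%:R + (p %| y)%:R * p%:R =
  (p * q %| y)%:R * (p * q)%:R + 1.
Proof.
move=> p_pr q_pr p_neq_q z_prim.
have co_pq : coprime p q by rewrite prime_coprime // dvdn_prime2.
have pq_gt0 : (0 < p * q)%N by rewrite muln_gt0 !prime_gt0.
rewrite -(sum_prim_root_dvdn y (erefl _) (prime_gt0 p_pr) z_prim).
rewrite -(sum_prim_root_dvdn y (mulnC p q) (prime_gt0 q_pr) z_prim).
(* Every m < pq is a unit or a multiple of p or of q, and only m = 0 is both. *)
rewrite -(sum_prim_root_exprM y z_prim) /ramanujan_sum big_mkcond.
rewrite (big_mkcond (fun m : 'I_(p * q) => (p %| m)%N)).
rewrite (big_mkcond (fun m : 'I_(p * q) => (q %| m)%N)) -!big_split /=.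
rewrite (bigD1 (Ordinal pq_gt0)) //= [in RHS](bigD1 (Ordinal pq_gt0)) //=.
have -> : coprime 0 (p * q) = false.
  by rewrite /coprime gcd0n muln_eq1 gtn_eqF ?prime_gt1.
rewrite mul0n expr0 !dvdn0 add0r addrC [RHS]addrAC [RHS]addrC; congr (_ + _).
apply: eq_bigr => m m_neq0.
have m_gt0 : (0 < m)%N by rewrite lt0n; rewrite -val_eqE in m_neq0.
rewrite coprimeMr ![coprime m _]coprime_sym !prime_coprime //.
case p_m: (p %| m)%N; case q_m: (q %| m)%N; rewrite /= ?add0r ?addr0 //.
have /(dvdn_leq m_gt0) : (p * q %| m)%N by rewrite Gauss_dvd // p_m q_m.
by rewrite leqNgt ltn_ord.
Qed.

Lemma sum_natr_mul (I : finType) (F : I -> nat) c :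
  \sum_k (F k)%:R * c%:R = (c * \sum_k F k)%N%:R :> algC.
Proof. by rewrite -mulr_suml -natr_sum -natrM mulnC. Qed.

Lemma dvdn_add_subn_mod d n m x : (0 < n)%N -> (d %| n)%N ->
  (d %| m + (n - x %% n))%N = (m == x %[mod d]).
Proof.
move=> n_gt0 d_n; rewrite addnBA ?(ltnW (ltn_pmod x n_gt0)) //.
rewrite -eqn_mod_dvd ?(leq_trans (ltnW (ltn_pmod x n_gt0))) ?leq_addl //.
by rewrite -modnDmr (eqP d_n) addn0 (modn_dvdm _ d_n).
Qed.

Section VanishingSumCounts.
Variables (I : finType) (z : algC) (a : I -> nat).
Hypothesis a_vanish : \sum_k z ^+ a k = 0.

Lemma vanishing_sum_count_prime d : prime d -> d.-primitive_root z ->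
  (d * count_mod a d 0 = #|I|)%N.
Proof.
move=> d_pr z_prim; apply/eqP; rewrite -(eqr_nat algC) -sum_natr_mul.
rewrite (eq_bigr (fun k => ramanujan_sum z d (a k) + 1)) => [|k _].
  by rewrite big_split /= (vanishing_sum_ramanujan z_prim a_vanish) add0r sumr_const.
by rewrite ramanujan_sum_prime // mod0n.
Qed.

Lemma vanishing_sum_count_pq p q : prime p -> prime q -> p != q ->
  (p * q).-primitive_root z -> count_identity a p q.
Proof.
move=> p_pr q_pr p_neq_q z_prim x.
have pq_gt0 : (0 < p * q)%N by rewrite muln_gt0 !prime_gt0.
pose b := (p * q - x %% (p * q))%N. (* a k + b = a k - x modulo p * q *)
have countE d : (d %| p * q)%N -> count_mod a d x = (\sum_k (d %| a k + b))%N.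
  by move=> d_pq; apply: eq_bigr => k _; rewrite dvdn_add_subn_mod.
rewrite (countE _ (dvdnn _)) (countE _ (dvdn_mull p (dvdnn q))).
rewrite (countE _ (dvdn_mulr q (dvdnn p))).
have : \sum_k (ramanujan_sum z (p * q) (a k + b) + (q %| a k + b)%:R * q%:R
                + (p %| a k + b)%:R * p%:R)
       = \sum_k ((p * q %| a k + b)%:R * (p * q)%:R + 1).
  by apply: eq_bigr => k _; apply: ramanujan_sum_pq.
rewrite !big_split /= (vanishing_sum_ramanujan z_prim (vanishing_sum_shift b a_vanish)).
rewrite add0r !sum_natr_mul sumr_const -!natrD => /eqP.
by rewrite eq_sym eqr_nat => /eqP.
Qed.

Lemma prim_root_of_vanishing_sum p q : prime p -> prime q -> p != q ->
  #|I| = (p + q)%N -> z ^+ (p * q) = 1 -> (p * q).-primitive_root z.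
Proof.
move=> p_pr q_pr p_neq_q card_I zpq.
have pq_gt0 : (0 < p * q)%N by rewrite muln_gt0 !prime_gt0.
(* The order d of z divides pq; d = 1 would make the sum p + q, and a prime
   d would divide p + q by vanishing_sum_count_prime. *)
have [d d_prim d_pq] := prim_order_exists pq_gt0 zpq.
have d_neq1 : d != 1%N.
  apply/eqP => d1; rewrite d1 in d_prim; move: a_vanish.
  have z1 : z = 1 by rewrite -[z]expr1 (prim_expr_order d_prim).
  rewrite z1 (eq_bigr (fun _ => 1)) => [|k _]; last by rewrite expr1n.
  by rewrite sumr_const card_I => /eqP; rewrite pnatr_eq0 addn_eq0 eqn0Ngt prime_gt0.
have prime_factor_not_dvd r s : prime r -> prime s -> r != s -> (r + s = p + q)%N ->
    ~~ (d %| r)%N.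
  move=> r_pr s_pr r_neq_s rs; apply/negP => d_r.
  have d_eq_r : d = r.
    by case/primeP: r_pr => _ /(_ d d_r) /orP[/eqP d1|/eqP //]; rewrite d1 in d_neq1.
  rewrite d_eq_r in d_prim; have := vanishing_sum_count_prime r_pr d_prim.
  rewrite card_I -rs => /(congr1 (dvdn r)); rewrite dvdn_mulr // dvdn_addr //.
  by rewrite dvdn_prime2 // (negPf r_neq_s).
have co_pq : coprime p q by rewrite prime_coprime // dvdn_prime2.
have [p_d|not_p_d] := boolP (p %| d)%N; last first.
  have co_dp : coprime d p by rewrite coprime_sym prime_coprime.
  have q_neq_p : q != p by rewrite eq_sym.
  by have := prime_factor_not_dvd q p q_pr p_pr q_neq_p (addnC q p);
     rewrite -(Gauss_dvdr _ co_dp) d_pq.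
have [q_d|not_q_d] := boolP (q %| d)%N; last first.
  have co_dq : coprime d q by rewrite coprime_sym prime_coprime.
  by have := prime_factor_not_dvd p q p_pr q_pr p_neq_q erefl;
     rewrite -(Gauss_dvdl _ co_dq) d_pq.
suff -> : (p * q)%N = d by [].
by apply/eqP; rewrite eqn_dvd Gauss_dvd // p_d q_d d_pq.
Qed.
End VanishingSumCounts.

Section TwoCosets.
Variables (I : finType) (G Gq Gp : zmodType) (fq : G -> Gq) (fp : G -> Gp).
Hypotheses (fqD : {morph fq : x y / x + y}) (fpD : {morph fp : x y / x + y}).
Hypothesis fqp_inj : forall x y, fq x = fq y -> fp x = fp y -> x = y.

Definition count_value (L : I -> G) x := #|[set k | L k == x]|.

(* The values of L, with multiplicity, are the two cosets r + ker fq and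
   r + ker fp; r is then the only repeated value. *)
Definition two_cosets (L : I -> G) r :=
  forall x, count_value L x = ((fq x == fq r) + (fp x == fp r))%N.

Lemma two_cosetsP L r k : two_cosets L r -> fq (L k) = fq r \/ fp (L k) = fp r.
Proof.
move=> Lr; have : (0 < count_value L (L k))%N by apply/card_gt0P; exists k; rewrite inE.
by rewrite Lr; case: eqP => [|_]; [left | case: eqP => [|//]; right].
Qed.

Lemma two_cosets_repeated L r x : two_cosets L r -> (1 < count_value L x)%N = (x == r).
Proof.
move=> Lr; rewrite Lr; have [-> | x_neq_r] := eqVneq x r; first by rewrite !eqxx.
by case: eqP => [xr_q|]; case: eqP => // xr_p; case/eqP: x_neq_r; apply: fqp_inj.
Qed.

Lemma card_two_cosets_fibre L r (S : {set I}) vq vp : two_cosets L r ->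
  {in S, forall k, fq (L k) = vq /\ fp (L k) = vp} ->
  (#|S| <= (vq == fq r) + (vp == fp r))%N.
Proof.
move=> Lr LS; have [-> | [k0 k0S]] := set_0Vmem S; first by rewrite cards0.
have [<- <-] := LS k0 k0S; rewrite -Lr; apply/subset_leq_card/subsetP => k kS.
by have [? ?] := LS k kS; have [? ?] := LS k0 k0S; rewrite inE; apply/eqP/fqp_inj; congruence.
Qed.

Section Sum.
Variables (L1 L2 L3 : I -> G) (r1 r2 r3 : G).
Hypotheses (L1r : two_cosets L1 r1) (L2r : two_cosets L2 r2) (L3r : two_cosets L3 r3).
Hypothesis L3E : forall k, L3 k = L1 k + L2 k.

Lemma card_coset_fibre_le4 : fq r1 + fq r2 != fq r3 ->
  (#|[set k | fq (L1 k) == fq r1]| <= 4)%N.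
Proof.
(* On A :&: B the q-part of L3 k misses fq r3, so its p-part is fp r3 and
   L3 k is one value, taken once; likewise for L2 on A :&: C.  On the rest of
   A the p-parts of L2 k and L3 k are fp r2 and fp r3, which pins L1 k to one
   value, taken at most twice. *)
move=> r3_neq.
set A := [set k | fq (L1 k) == fq r1].
set B := [set k | fq (L2 k) == fq r2].
set C := [set k | fq (L3 k) == fq r3].
have AB : (#|A :&: B| <= 1)%N.
  have := @card_two_cosets_fibre L3 r3 (A :&: B) (fq r1 + fq r2) (fp r3) L3r.
  rewrite (negPf r3_neq) eqxx; apply=> k; rewrite !inE => /andP[/eqP k1 /eqP k2].
  have k3 : fq (L3 k) = fq r1 + fq r2 by rewrite L3E fqD k1 k2.
  by split=> //; case: (two_cosetsP k L3r) => // k3'; rewrite -k3 k3' eqxx in r3_neq.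
have AC : (#|A :&: C| <= 1)%N.
  have := @card_two_cosets_fibre L2 r2 (A :&: C) (fq r3 - fq r1) (fp r2) L2r.
  have -> : (fq r3 - fq r1 == fq r2) = false.
    by apply: contraNF r3_neq => /eqP <-; rewrite addrC subrK.
  rewrite eqxx; apply=> k; rewrite !inE => /andP[/eqP k1 /eqP k3].
  have k2 : fq (L2 k) = fq r3 - fq r1 by rewrite -k1 -k3 L3E fqD addrC addKr.
  split=> //; case: (two_cosetsP k L2r) => // k2'.
  by rewrite -k2' k2 addrC subrK eqxx in r3_neq.
have A_BC : (#|A :\: B :\: C| <= 2)%N.
  have := @card_two_cosets_fibre L1 r1 (A :\: B :\: C) (fq r1) (fp r3 - fp r2) L1r.
  move/(_ _)/leq_trans; apply; last by rewrite eqxx; case: (_ == _).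
  move=> k; rewrite !inE => /and3P[k3 k2 /eqP k1]; split=> //.
  case: (two_cosetsP k L2r) => [/eqP|k2']; first by rewrite (negPf k2).
  case: (two_cosetsP k L3r) => [/eqP|k3']; first by rewrite (negPf k3).
  by rewrite -k2' -k3' L3E fpD addrK.
have sub : A \subset (A :&: B) :|: (A :&: C) :|: (A :\: B :\: C).
  apply/subsetP => k kA; rewrite !in_setU !in_setI !in_setD kA /=.
  by case: (k \in B); case: (k \in C).
apply: leq_trans (subset_leq_card sub) _.
apply: leq_trans (leq_card_setU _ _) _; rewrite -[4%N]/(2 + 2)%N leq_add //.
by apply: leq_trans (leq_card_setU _ _) _; rewrite -[2%N]/(1 + 1)%N leq_add.
Qed.

Lemma two_cosets_add : (4 < #|[set k | fq (L1 k) == fq r1]|)%N -> fq r3 = fq r1 + fq r2.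
Proof.
move=> A_big; apply/eqP; rewrite eq_sym; apply: contraTT A_big => r3_neq.
by rewrite -leqNgt card_coset_fibre_le4.
Qed.
End Sum.

End TwoCosets.

Lemma card_coset_fibre_ge (I : finType) (G : finZmodType) (Gq Gp : zmodType)
    (fq : G -> Gq) (fp : G -> Gp) (L : I -> G) r : two_cosets fq fp L r ->
  (#|[set x | fq x == fq r]| <= #|[set k | fq (L k) == fq r]|)%N.
Proof.
move=> Lr; apply: leq_trans (leq_imset_card L _); apply/subset_leq_card/subsetP => x.
rewrite inE => /eqP xr; have /card_gt0P[k] : (0 < count_value L x)%N by rewrite Lr xr eqxx.
by rewrite inE => /eqP Lk; apply/imsetP; exists k; rewrite // inE Lk xr.
Qed.

Lemma ltn_valZp n (x : 'Z_n) : (1 < n)%N -> (x < n)%N.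
Proof. by move=> n_gt1; rewrite -[X in (_ < X)%N](Zp_cast n_gt1). Qed.

Definition resZp n d (x : 'Z_n) : 'Z_d := (x : nat)%:R.
Arguments resZp {n} d x.

Section Reduction.
Variables n d : nat.
Hypotheses (n_gt1 : (1 < n)%N) (d_gt1 : (1 < d)%N) (d_n : (d %| n)%N).

Lemma resZp_nat m : resZp d (m%:R : 'Z_n) = m%:R.
Proof. by rewrite /resZp val_Zp_nat // -(Zp_nat_mod d_gt1) (modn_dvdm _ d_n) Zp_nat_mod. Qed.

Lemma resZpD : {morph @resZp n d : x y / x + y}.
Proof. by move=> x y; rewrite -[x]natr_Zp -[y]natr_Zp -natrD !resZp_nat natrD. Qed.

Lemma resZpB : {morph @resZp n d : x y / x - y}.
Proof. by move=> x y; apply/eqP; rewrite eq_sym subr_eq -resZpD subrK. Qed.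

Lemma eq_resZp (x y : 'Z_n) : (resZp d x == resZp d y) = (x == y %[mod d])%N.
Proof. by rewrite -val_eqE /= !val_Zp_nat. Qed.

Lemma mem_multiples (z : 'Z_n) : (z \in multiples n d) = (resZp d z == 0).
Proof.
have -> : 0 = resZp d (0 : 'Z_n) by [].
rewrite eq_resZp mod0n; apply/imsetP/idP => [[y _ ->]|].
  by rewrite -[y]natr_Zp -natrM val_Zp_nat // modn_dvdm // modnMr.
by case/dvdnP=> m zE; exists m%:R; rewrite // -[z]natr_Zp -natrM mulnC zE.
Qed.

End Reduction.

Lemma card_set_sum (I : finType) (P : pred I) : #|[set k | P k]| = (\sum_k P k)%N.
Proof. by rewrite -sum1dep_card big_mkcond; apply: eq_bigr => k _; case: (P k). Qed.

Lemma LijD N n (M : 'M['Z_n]_N) i j k x : Lij M i k x = Lij M i j x + Lij M j k x.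
Proof. by rewrite /Lij [RHS]addrC addrA subrK. Qed.

Section PrimeProduct.
Variables p q : nat.
Hypotheses (p_pr : prime p) (q_pr : prime q) (p_neq_q : p != q).

Let p_gt1 := prime_gt1 p_pr.
Let q_gt1 := prime_gt1 q_pr.
Let pq_gt1 : (1 < p * q)%N.
Proof. by rewrite (ltn_trans p_gt1) // ltn_Pmulr // ltnW. Qed.
Let p_pq : (p %| p * q)%N := dvdn_mulr q (dvdnn p).
Let q_pq : (q %| p * q)%N := dvdn_mull p (dvdnn q).

Lemma resZp_pqD : {morph @resZp (p * q) q : x y / x + y}.
Proof. exact: resZpD. Qed.

Lemma resZp_inj (x y : 'Z_(p * q)) :
  resZp q x = resZp q y -> resZp p x = resZp p y -> x = y.
Proof.
move=> /eqP; rewrite eq_resZp // => xy_q /eqP; rewrite eq_resZp // => xy_p.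
have co_pq : coprime p q by rewrite prime_coprime // dvdn_prime2.
move: (chinese_remainder co_pq x y); rewrite xy_p xy_q !modn_small ?ltn_valZp //.
by move/eqP/val_inj.
Qed.

Lemma card_resZp_fibre (r : 'Z_(p * q)) :
  (p <= #|[set x : 'Z_(p * q) | resZp q x == resZp q r]|)%N.
Proof.
pose f (t : 'I_p) : 'Z_(p * q) := r + (q * t)%:R.
have f_inj : injective f.
  move=> t t' /addrI /(congr1 val); rewrite /= !val_Zp_nat // !modn_small;
    try by rewrite mulnC ltn_pmul2r ?prime_gt0.
  by move/eqP; rewrite eqn_pmul2l ?prime_gt0 // => /eqP/val_inj.
rewrite -[p in (p <= _)%N]card_ord -(card_imset _ f_inj); apply/subset_leq_card/subsetP.
move=> _ /imsetP[t _ ->]; rewrite inE /f resZpD // resZp_nat //.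
by rewrite natrM -(Zp_nat_mod q_gt1) modnn mul0r addr0.
Qed.

Section HadamardPhase.
Variable M : 'M['Z_(p * q)]_(p + q).
Hypothesis hM : hadamard_phase M.

Notation two_cosets_pq := (two_cosets (resZp q) (resZp p)).

Lemma Lij_two_cosets i j : i != j -> exists r, two_cosets_pq (Lij M i j) r.
Proof.
move=> i_neq_j; pose a k := nat_of_ord (Lij M i j k).
have a_vanish : \sum_k omega (p * q) ^+ a k = 0 := sum_omega_Lij_eq0 pq_gt1 hM i_neq_j.
have card_I : #|'I_(p + q)| = (p + q)%N by rewrite card_ord.
have w_prim := prim_root_of_vanishing_sum a_vanish p_pr q_pr p_neq_q card_I
  (omega_expr_order (ltnW pq_gt1)).
have [r rE] := count_mod_structure p_pr q_pr p_neq_q card_I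
  (vanishing_sum_count_pq a_vanish p_pr q_pr p_neq_q w_prim).
exists r%:R => x; rewrite /count_value card_set_sum.
transitivity (count_mod a (p * q)%N x).
  by apply: eq_bigr => k _; rewrite !modn_small ?ltn_valZp.
by rewrite rE !eq_resZp // !val_Zp_nat // !modn_dvdm.
Qed.

Lemma mem_Pplus i j r k : two_cosets_pq (Lij M i j) r ->
  (k \in Pplus q M i j) = (resZp q (Lij M i j k) == resZp q r).
Proof.
move=> Lr; have repE := two_cosets_repeated resZp_inj _ Lr.
rewrite inE /repeated; apply/existsP/idP => [[r0]|Lk_r]; last first.
  by exists r; rewrite repE eqxx mem_multiples // resZpB // subr_eq0.
by rewrite repE mem_multiples // resZpB // subr_eq0 => /andP[/eqP->].
Qed.

Lemma card_Lij_fibre_gt4 i j r : (5 <= p)%N -> two_cosets_pq (Lij M i j) r ->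
  (4 < #|[set k | resZp q (Lij M i j k) == resZp q r]|)%N.
Proof.
move=> p_ge5 Lr; apply: leq_trans p_ge5 _.
exact: leq_trans (card_resZp_fibre r) (card_coset_fibre_ge Lr).
Qed.

Lemma two_cosets_Lij_add i j k r1 r2 r3 : (5 <= p)%N ->
  two_cosets_pq (Lij M i j) r1 -> two_cosets_pq (Lij M j k) r2 ->
  two_cosets_pq (Lij M i k) r3 -> resZp q r3 = resZp q r1 + resZp q r2.
Proof.
move=> p_ge5 L1 L2 L3; apply: (two_cosets_add _ _ resZp_inj L1 L2 L3).
- exact: resZpD.
- exact: resZpD.
- exact: LijD.
- exact: card_Lij_fibre_gt4.
Qed.

End HadamardPhase.
End PrimeProduct.

Local Close Scope ring_scope.

Theorem corollary6p5 (p q : nat) (M : 'M['Z_(p * q)]_(p + q)) :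
  prime p -> prime q -> p != q -> 5 <= p ->
  hadamard_phase M ->
  forall i j k : 'I_(p + q), i != j -> j != k -> i != k ->
    Pplus q M i j :&: Pplus q M j k \subset Pplus q M i k.
Proof.
move=> p_pr q_pr p_neq_q p_ge5 hM i j k ij jk ik.
have [r1 L1] := Lij_two_cosets p_pr q_pr p_neq_q hM ij.
have [r2 L2] := Lij_two_cosets p_pr q_pr p_neq_q hM jk.
have [r3 L3] := Lij_two_cosets p_pr q_pr p_neq_q hM ik.
have r3E := two_cosets_Lij_add p_pr q_pr p_neq_q p_ge5 L1 L2 L3.
apply/subsetP => x; rewrite in_setI (mem_Pplus p_pr q_pr p_neq_q x L1).
rewrite (mem_Pplus p_pr q_pr p_neq_q x L2) (mem_Pplus p_pr q_pr p_neq_q x L3).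
rewrite (LijD M i j k) resZp_pqD // r3E.
by case/andP=> /eqP-> /eqP->.
Qed.
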